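(* Let $(K,D)$ be a differential field and $v$ a differential valuation on $(K,D)$. Then $D:(K,v)\to(K,v)$ is immediate if and only if $(K,D,v)$ admits asymptotic integration.
   Context: $C=\{a\in K: Da=0\}$ is the field of constants. A valuation $v$ of $K$ is a differential valuation (in the sense of Rosenlicht) if $v$ is trivial on $C$, for every $y\in K$ with $vy=0$ there is a unique $c\in C$ with $v(y-c)>0$, and for all $a,b\in K$ with $va\ge0$, $vb>0$, $b\ne0$: $v(bDa/Db)>0$. $(K,D,v)$ admits asymptotic integration if for every $a'\in K\setminus\{0\}$ there is $a\in K$ with $v(a'-Da)>va'$. $K$ is an ultrametric space with $u(a,b)=v(a-b)$; with $B(x,y)=\{z:v(x-z)\ge v(x-y)\}$, a point $z'$ is an attractor for a map $g$ if for every $y$ with $z'\ne gy$ there is $z$ with $v(gz-z')>v(gy-z')$ and $g(B(y,z))\subseteq B(gy,z')$; $g$ is immediate if every point is an attractor. *)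

From mathcomp Require Import all_boot all_order all_algebra.
Set Implicit Arguments. Unset Strict Implicit. Unset Printing Implicit Defensive.
Import GRing.Theory.
Local Open Scope ring_scope.

Definition ordered_abelian_group (G : zmodType) (le : rel G) : Prop :=
  [/\ reflexive le, antisymmetric le, transitive le, total le
    & forall x y z : G, le x y -> le (x + z) (y + z)].

(* Order on G ∪ {∞}, encoded as option G with None = ∞. *)
Definition leo (G : zmodType) (le : rel G) (x y : option G) : bool :=
  match x, y with
  | _, None => true
  | None, Some _ => false
  | Some a, Some b => le a b
  end.
Definition lto (G : zmodType) (le : rel G) (x y : option G) : bool :=
  ~~ leo le y x.

Definition oadd (G : zmodType) (x y : option G) : option G :=
  match x, y with
  | Some a, Some b => Some (a + b)
  | _, _ => None
  end.

Definition is_valuation (K : fieldType) (G : zmodType) (le : rel G)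
  (v : K -> option G) : Prop :=
  [/\ ordered_abelian_group le,
      forall x, v x = None <-> x = 0,
      forall x y, v (x * y) = oadd (v x) (v y),
      forall x y, leo le (if leo le (v x) (v y) then v x else v y) (v (x + y))
    & forall g : G, exists x, v x = Some g].

Definition is_derivation (K : fieldType) (D : K -> K) : Prop :=
  (forall x y, D (x + y) = D x + D y) /\
  (forall x y, D (x * y) = x * D y + D x * y).

(* Rosenlicht's differential valuation; C = {a | D a = 0}. *)
Definition differential_valuation (K : fieldType) (D : K -> K)
  (G : zmodType) (le : rel G) (v : K -> option G) : Prop :=
  [/\ forall c, D c = 0 -> c != 0 -> v c = Some 0,
      forall y, v y = Some 0 ->
        exists c, (D c = 0 /\ lto le (Some 0) (v (y - c))) /\
          forall c', D c' = 0 /\ lto le (Some 0) (v (y - c')) -> c' = c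
    & forall a b, leo le (Some 0) (v a) -> lto le (Some 0) (v b) -> b != 0 ->
        lto le (Some 0) (v (b * D a / D b))].

Definition asymptotic_integration (K : fieldType) (D : K -> K)
  (G : zmodType) (le : rel G) (v : K -> option G) : Prop :=
  forall a' : K, a' != 0 -> exists a, lto le (v a') (v (a' - D a)).

Definition ball (K : fieldType) (G : zmodType) (le : rel G)
  (v : K -> option G) (x y z : K) : bool :=
  leo le (v (x - y)) (v (x - z)).

Definition attractor (K : fieldType) (G : zmodType) (le : rel G)
  (v : K -> option G) (g : K -> K) (z' : K) : Prop :=
  forall y, z' != g y ->
    exists z, lto le (v (g y - z')) (v (g z - z')) /\
      forall w, ball le v y z w -> ball le v (g y) z' (g w).

Definition immediate (K : fieldType) (G : zmodType) (le : rel G)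
  (v : K -> option G) (g : K -> K) : Prop :=
  forall z', attractor le v g z'.

(** The valuation of a derivative is controlled by Rosenlicht's axiom: if
    [v g <> 0] and [v f >= v g], then applying the axiom to [f/g] and to [b = g]
    or [b = 1/g] (whichever has positive valuation) gives
    [v (f'/g' - f/g) > 0], hence [v f' >= v g'].  So [D] is monotone on
    elements of nonzero valuation.  Immediacy at the point [z'] and the
    centre [y] then amounts to finding [a] with [v (z' - y' - a') > v (z' - y')],
    which is exactly asymptotic integration of [z' - y']: the new point is
    [y + a], after [a] has been moved off valuation [0] by subtracting the
    constant that is its residue. *)
From mathcomp Require Import all_boot all_order all_algebra.
From mathcomp Require Import ring.
Set Implicit Arguments. Unset Strict Implicit. Unset Printing Implicit Defensive.
Import GRing.Theory.
Local Open Scope ring_scope.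

Section OrderedGroup.
Variables (G : zmodType) (le : rel G).
Hypothesis oag : ordered_abelian_group le.

Lemma leoo x : leo le x x.
Proof. by case: oag => r _ _ _ _; case: x => //=. Qed.

Lemma leo_trans x y z : leo le x y -> leo le y z -> leo le x z.
Proof. by case: oag => _ _ t _ _; case: x; case: y; case: z => //= ? ? ?; apply: t. Qed.

Lemma leo_total x y : leo le x y || leo le y x.
Proof. by case: oag => _ _ _ t _; case: x; case: y => //=. Qed.

Lemma leo_anti x y : leo le x y -> leo le y x -> x = y.
Proof. by case: oag => _ a _ _ _; case: x => [x|]; case: y => [y|] //= h1 h2; rewrite (a x y) ?h1. Qed.

Lemma ltoW x y : lto le x y -> leo le x y.
Proof. by rewrite /lto; case/orP: (leo_total x y) => ->. Qed.

Lemma addr_self_eq0 (h : G) : h + h = 0 -> h = 0.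
Proof.
case: oag => _ a _ tot tr hh.
by case/orP: (tot 0 h) => H; have := tr _ _ h H; rewrite add0r hh => H2;
  apply: a; rewrite H H2.
Qed.

End OrderedGroup.

Section Valuation.
Variables (K : fieldType) (G : zmodType) (le : rel G) (v : K -> option G).
Hypothesis val : is_valuation le v.

Lemma valuation_oag : ordered_abelian_group le.
Proof. by case: val. Qed.

Lemma valuation0 : v 0 = None.
Proof. by case: val => _ h _ _ _; apply/h. Qed.

Lemma valuation_Some x : x != 0 -> exists g, v x = Some g.
Proof.
case: val => _ h _ _ _ /eqP nx; case E: (v x) => [g|]; first by exists g.
by case: nx; apply/h.
Qed.

Lemma valuation1 : v 1 = Some 0.
Proof.
have [g Hg] := valuation_Some (oner_neq0 K).
case: val => _ _ m _ _; have := m 1 1; rewrite mulr1 Hg /= => [[]] e.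
by rewrite -(addrK g g) -e subrr.
Qed.

Lemma valuationN x : v (- x) = v x.
Proof.
have [|h Hh] := valuation_Some (_ : (-1 : K) != 0); first by rewrite oppr_eq0 oner_neq0.
case: val => oag _ m _ _.
have h0 : h = 0.
  apply: (addr_self_eq0 oag).
  by have := m (-1) (-1); rewrite mulrNN mulr1 valuation1 Hh /=; case.
by rewrite -mulN1r m Hh h0; case: (v x) => //= g; rewrite add0r.
Qed.

Lemma valuationD_ge a x y :
  leo le a (v x) -> leo le a (v y) -> leo le a (v (x + y)).
Proof.
move=> h1 h2; case: val => oag _ _ u _; apply: (leo_trans oag _ (u x y)).
by case: ifP.
Qed.

Lemma valuationV x g : v x = Some g -> v x^-1 = Some (- g).
Proof.
move=> Hg; have nx : x != 0 by apply: contra_eq_neq Hg => ->; rewrite valuation0.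
have [h Hh] := valuation_Some (invr_neq0 nx).
case: val => _ _ m _ _; have := m x x^-1; rewrite divff // valuation1 Hg Hh /=.
by case=> e; congr Some; rewrite -[h](addKr g) -e addr0.
Qed.

Lemma valuation_div_ge0 f g : g != 0 -> leo le (v g) (v f) ->
  leo le (Some 0) (v (f / g)).
Proof.
move=> ng; have [gam Hg] := valuation_Some ng.
case: val => [[_ _ _ _ tr] _ m _ _].
rewrite m (valuationV Hg) Hg; case: (v f) => //= phi h.
by have := tr _ _ (- gam) h; rewrite subrr.
Qed.

Lemma valuation_ge_div f g : g != 0 -> leo le (Some 0) (v (f / g)) ->
  leo le (v g) (v f).
Proof.
move=> ng; have [gam Hg] := valuation_Some ng.
case: val => [[_ _ _ _ tr] _ m _ _] h; rewrite -[f](divfK ng) m Hg.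
move: h; case: (v (f / g)) => //= del h.
by have := tr _ _ gam h; rewrite add0r.
Qed.

Lemma valuation_neq0_gt0 g : g != 0 -> v g != Some 0 ->
  lto le (Some 0) (v g) \/ lto le (Some 0) (v g^-1).
Proof.
move=> ng vg0; have [gam Hg] := valuation_Some ng.
case: val => [[_ an _ tot tr] _ _ _ _].
have nle : ~~ (le 0 gam && le gam 0).
  by apply: contra vg0 => h; rewrite Hg (an _ _ h).
rewrite (valuationV Hg) Hg /lto /=.
case/orP: (tot 0 gam) => hg; [left | right]; apply: contra nle => h.
  by rewrite hg h.
by have := tr _ _ gam h; rewrite addNr add0r => ->; rewrite hg.
Qed.

Lemma valuation_eq_of_lt_sub x y : lto le (v x) (v (x - y)) -> v x = v y.
Proof.
move=> h; have oag := valuation_oag.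
have ex : x = y + (x - y) by rewrite addrC subrK.
apply: (leo_anti oag).
  have -> : y = x + - (x - y) by rewrite opprB addrC subrK.
  by apply: valuationD_ge; [exact: leoo | rewrite valuationN; exact: ltoW h].
case/orP: (leo_total oag (v y) (v (x - y))) => h2.
  by rewrite {1}ex; apply: valuationD_ge; rewrite ?(leoo oag).
by move/negP: h; case; rewrite {2}ex; apply: valuationD_ge; rewrite ?(leoo oag).
Qed.

End Valuation.

Section Derivation.
Variables (K : fieldType) (D : K -> K).
Hypothesis der : is_derivation D.

Lemma derivation0 : D 0 = 0.
Proof. case: der => DD _; apply: (addrI (D 0)); by rewrite -DD !addr0. Qed.

Lemma derivationN x : D (- x) = - D x.
Proof. case: der => DD _; apply: (addrI (D x)); by rewrite -DD !subrr derivation0. Qed.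

Lemma derivationB x y : D (x - y) = D x - D y.
Proof. by case: der => DD _; rewrite DD derivationN. Qed.

Lemma derivation1 : D 1 = 0.
Proof.
case: der => _ DM; have := DM 1 1; rewrite !mulr1 !mul1r => h.
by apply: (addrI (D 1)); rewrite addr0 -{1}h.
Qed.

Lemma derivationV x : x != 0 -> D x^-1 = - D x / (x * x).
Proof.
move=> nx; case: der => _ DM.
have h : x * D x^-1 + D x * x^-1 = 0 by rewrite -DM divff // derivation1.
have -> : D x^-1 = x^-1 * (x * D x^-1) by rewrite mulrA mulVf // mul1r.
rewrite (_ : x * D x^-1 = - (D x * x^-1)); first by field.
by apply/eqP; rewrite -addr_eq0 h.
Qed.

Lemma derivation_div f g : g != 0 -> D (f / g) = (D f * g - f * D g) / (g * g).
Proof. by move=> ng; case: der => _ DM; rewrite DM derivationV //; field. Qed.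

End Derivation.

Section DifferentialValuation.
Variables (K : fieldType) (D : K -> K) (G : zmodType) (le : rel G).
Variable v : K -> option G.
Hypotheses (der : is_derivation D) (val : is_valuation le v).
Hypothesis dval : differential_valuation D le v.

Lemma derivation_neq0 g : g != 0 -> v g != Some 0 -> D g != 0.
Proof. by case: dval => dv1 _ _ ng; apply: contra_neq => /dv1 ->. Qed.

Lemma valuation_quotient_derivation f g : g != 0 -> v g != Some 0 ->
  leo le (v g) (v f) -> lto le (Some 0) (v (D f / D g - f / g)).
Proof.
move=> ng vg0 hfg; case: dval => _ _ dv3.
have nDg := derivation_neq0 ng vg0.
have hfg0 := valuation_div_ge0 val ng hfg.
have Dfg := derivation_div der f ng.
case: (valuation_neq0_gt0 val ng vg0) => pos.
  have := dv3 (f / g) g hfg0 pos ng.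
  by rewrite (_ : g * _ / _ = D f / D g - f / g) // Dfg; field; rewrite ng nDg.
have := dv3 (f / g) g^-1 hfg0 pos (invr_neq0 ng).
rewrite (_ : g^-1 * _ / _ = - (D f / D g - f / g)) ?(valuationN val) //.
by rewrite Dfg (derivationV der ng); field; rewrite ng nDg ?oppr_eq0 ?nDg.
Qed.

Lemma valuation_derivation_mono f g : g != 0 -> v g != Some 0 ->
  leo le (v g) (v f) -> leo le (v (D g)) (v (D f)).
Proof.
move=> ng vg0 hfg; apply: (valuation_ge_div val (derivation_neq0 ng vg0)).
have -> : D f / D g = (D f / D g - f / g) + f / g by rewrite subrK.
apply: (valuationD_ge val); last exact (valuation_div_ge0 val ng hfg).
exact (ltoW (valuation_oag val) (valuation_quotient_derivation ng vg0 hfg)).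
Qed.

Lemma antiderivative_valuation_neq0 a : D a != 0 ->
  exists2 b, b != 0 /\ v b != Some 0 & D b = D a.
Proof.
move=> Da0; have oag := valuation_oag val.
case E: (v a == Some 0); last first.
  exists a => //; split; last by rewrite E.
  by apply: contra_neq Da0 => ->; rewrite (derivation0 der).
case: dval => _ dv2 _; have [c [[Dc hc] _]] := dv2 a (eqP E).
exists (a - c); last by rewrite (derivationB der) Dc subr0.
split.
  apply: contra_neq Da0 => ac0; case: (der) => DD _.
  by rewrite -[a](subrK c) DD ac0 (derivation0 der) Dc addr0.
by apply: contraTneq hc => ->; rewrite /lto (leoo oag).
Qed.

Lemma immediate_asymptotic_integration :
  immediate le v D -> asymptotic_integration D le v.
Proof.
move=> imm a' na; have [|z [hz _]] := imm a' 0; first by rewrite (derivation0 der).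
exists z; move: hz.
by rewrite (derivation0 der) sub0r (valuationN val) -opprB (valuationN val).
Qed.

Lemma asymptotic_integration_immediate :
  asymptotic_integration D le v -> immediate le v D.
Proof.
move=> ai z' y nz; have oag := valuation_oag val; case: (der) => DD _.
have [|a ha] := ai (z' - D y); first by rewrite subr_eq0.
have Da0 : D a != 0 by apply: contraTneq ha => ->; rewrite subr0 /lto (leoo oag).
have [b [nb vb0] Db] := antiderivative_valuation_neq0 Da0.
exists (y + b); split.
  rewrite -[D y - z']opprB (valuationN val).
  by rewrite (_ : D (y + b) - z' = - (z' - D y - D a)) ?(valuationN val) // DD Db; ring.
move=> w; rewrite /ball (_ : y - (y + b) = - b) ?(valuationN val); last by ring.
rewrite -(derivationB der) -[D y - z']opprB (valuationN val).
rewrite (valuation_eq_of_lt_sub val ha) -Db.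
exact: valuation_derivation_mono.
Qed.

End DifferentialValuation.

Theorem proposition54 (K : fieldType) (D : K -> K) (G : zmodType)
  (le : rel G) (v : K -> option G) :
  is_derivation D -> is_valuation le v -> differential_valuation D le v ->
  (immediate le v D <-> asymptotic_integration D le v).
Proof.
move=> der val dval; split.
  exact: immediate_asymptotic_integration.
exact: asymptotic_integration_immediate.
Qed.
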